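(* Let $A,B,s>0$ and $p$ a positive integer, with $s\ge1$ and $p\le\sqrt B$. Then \[ \frac{p^2}{e}\le\sum_{\substack{k_1,k_2\in\mathbb{Z}\\ |k_1p-A|\le s\sqrt B,\ |k_2p-A|\le s\sqrt B}}(k_1p-k_2p)^2\exp\left(-\frac{(k_1p-A)^2}{2B}-\frac{(k_2p-A)^2}{2B}\right)\le\frac{24e^4\pi B^2}{p^2}. \] *)

From HB Require Import structures.
From mathcomp Require Import all_boot all_order all_algebra.
From mathcomp Require Import all_classical all_reals all_analysis.
Set Implicit Arguments. Unset Strict Implicit. Unset Printing Implicit Defensive.
Import Order.TTheory GRing.Theory Num.Theory.
Local Open Scope ring_scope.

(* The (finite) set of integers k with |k p - A| <= s sqrt B, enumerated as a
   duplicate-free sequence.  Every such k satisfies |k| <= (|A| + s sqrt B)/p,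
   hence lies in [-N, N] with N below, so the filter enumerates exactly all of them
   (when p > 0). *)
Definition window_bound (R : realType) (p : nat) (A B s : R) : nat :=
  (`|Num.floor ((`|A| + s * Num.sqrt B) / p%:R)|%N + 1)%N.

Definition window (R : realType) (p : nat) (A B s : R) : seq int :=
  let N := window_bound p A B s in
  [seq k <- [seq (i%:Z - N%:Z)%R | i <- iota 0 (N + N).+1]
     | `|(k%:~R : R) * p%:R - A| <= s * Num.sqrt B].

Definition claim_sum (R : realType) (p : nat) (A B s : R) : R :=
  \sum_(k1 <- window p A B s) \sum_(k2 <- window p A B s)
     ((k1%:~R * p%:R - k2%:~R * p%:R) ^+ 2 *
      expR (- ((k1%:~R * p%:R - A) ^+ 2) / (2 * B)
            - ((k2%:~R * p%:R - A) ^+ 2) / (2 * B))).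

From HB Require Import structures.
From mathcomp Require Import all_boot all_order all_algebra.
From mathcomp Require Import all_classical all_reals all_analysis.
From mathcomp Require Import ring lra zify.
Import Order.TTheory GRing.Theory Num.Theory.
Local Open Scope ring_scope.

(* The lower bound is a single term: the neighbours k = floor (A / p) and k + 1
   both satisfy |k p - A| <= p <= sqrt B, so their term is at least p^2 / e.
   For the upper bound, x^2 exp (- x^2 / 4B) <= 4B gives
   (x - y)^2 exp (- (x^2 + y^2) / 2B) <= 16 B g(x) g(y) with g(x) = exp (- x^2 / 4B),
   so the double sum is at most 16 B (sum_k g(k p - A))^2.  That single sum samples
   a Gaussian along a progression of step d = p / (2 sqrt B) <= 1/2; comparing it,
   via exp (- y^2) <= e^(1/4) exp (- |y|), with the telescoping primitive of
   exp (- |t|) bounds it by 2 e / d.  This gives 256 e^2 B^2 / p^2, and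
   256 <= 24 e^2 pi. *)

Section exponential_bounds.
Context {R : realType}.
Implicit Types c d u x y : R.

Lemma expR1_ge_pow n : (1 + n.+1%:R^-1) ^+ n.+1 <= expR 1 :> R.
Proof.
rewrite -[in leRHS](@mulfV _ n.+1%:R) // expRM_natl.
by apply: lerXn2r; rewrite ?expR_ge1Dx ?nnegrE ?expR_ge0.
Qed.

Lemma mulr_expRN_le1 u : u * expR (- u) <= 1.
Proof.
have := expR_ge1Dx u; have := expR_gt0 (- u); have := expRxMexpNx_1 u.
nra.
Qed.

Lemma sqr_mulr_expRN_le c x : 0 < c -> x ^+ 2 * expR (- x ^+ 2 / c) <= c.
Proof.
move=> c_gt0; rewrite mulNr.
have -> : x ^+ 2 * expR (- (x ^+ 2 / c)) =
          c * (x ^+ 2 / c * expR (- (x ^+ 2 / c))) by field; lra.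
by rewrite -[leRHS]mulr1 ler_wpM2l ?mulr_expRN_le1 // ltW.
Qed.

Lemma expRN_sqr_le y : expR (- y ^+ 2) <= expR (1 / 4) * expR (- `|y|).
Proof.
rewrite -expRD ler_expR -real_normK ?num_real //.
have := sqr_ge0 (`|y| - 1 / 2); rewrite sqrrB; lra.
Qed.

(* [expNnorm_primitive y] is the integral of [exp (- |t|)] from [0] to [y]. *)
Definition expNnorm_primitive y : R :=
  if 0 <= y then 1 - expR (- y) else expR y - 1.

Local Notation Phi := expNnorm_primitive.

Lemma expNnorm_primitive_bound y : -1 <= Phi y <= 1.
Proof.
rewrite /Phi; have := expR_gt0 y; have := expR_gt0 (- y).
case: (leP 0 y) => y0 ? ?.
  have : expR (- y) <= 1 by rewrite expR_le1 oppr_le0.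
  lra.
have : expR y <= 1 by rewrite expR_le1 (ltW y0).
lra.
Qed.

Lemma expNnorm_primitive_incr y d : 0 <= d ->
  expR (- `|y|) * (1 - expR (- d)) <= Phi y - Phi (y - d).
Proof.
move=> d_ge0; rewrite /Phi.
have [y_lt0|y_ge0] := ltP y 0.
  have yd_lt0 : y - d < 0 by lra.
  by rewrite ltr0_norm // opprK (lt_geF yd_lt0) expRD; lra.
rewrite ger0_norm //.
have ey_gt0 := expR_gt0 (- y); have ed_gt0 := expR_gt0 (- d).
have [yd_ge0|yd_lt0] := leP 0 (y - d).
  have -> : expR (- (y - d)) = expR (- y) * expR d by rewrite -expRD opprB addrC.
  have := expR_ge1Dx d; have := expR_ge1Dx (- d).
  nra.
have ey_le1 : expR (- y) <= 1 by rewrite expR_le1; lra.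
have eyd_le1 : expR (y - d) <= 1 by rewrite expR_le1; lra.
have <- : expR (- y) * expR (y - d) = expR (- d) by rewrite -expRD addrA addNr add0r.
have : 0 <= (1 - expR (- y)) * (1 - expR (y - d)) by apply: mulr_ge0; lra.
nra.
Qed.

Lemma sum_expNnorm_le c d n : 0 < d ->
  \sum_(0 <= i < n) expR (- `|c + i%:R * d|) <= 2 / (1 - expR (- d)).
Proof.
move=> d_gt0; have q_gt0 : 0 < 1 - expR (- d).
  by rewrite subr_gt0 expR_lt1 oppr_lt0.
rewrite ler_pdivlMr // mulr_suml.
pose u i := Phi (c + i%:R * d - d).
apply: le_trans (_ : \sum_(0 <= i < n) (u i.+1 - u i) <= _).
  apply: ler_sum => i _; rewrite /u.
  have -> : c + i.+1%:R * d - d = c + i%:R * d by rewrite mulrSr; ring.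
  exact: expNnorm_primitive_incr (ltW d_gt0).
rewrite telescope_sumr //.
have := expNnorm_primitive_bound (c + n%:R * d - d).
have := expNnorm_primitive_bound (c + 0%:R * d - d).
rewrite /u; lra.
Qed.

Lemma sum_gauss_le c d n : 0 < d -> d <= 3 / 4 ->
  \sum_(0 <= i < n) expR (- (c + i%:R * d) ^+ 2) <= 2 * expR 1 / d.
Proof.
move=> d_gt0 d_le; have q_gt0 : 0 < 1 - expR (- d).
  by rewrite subr_gt0 expR_lt1 oppr_lt0.
apply: (@le_trans _ _ (expR (1 / 4) * \sum_(0 <= i < n) expR (- `|c + i%:R * d|))).
  by rewrite mulr_sumr; apply: ler_sum => i _; apply: expRN_sqr_le.
apply: le_trans (ler_wpM2l (expR_ge0 _) (sum_expNnorm_le c d n d_gt0)) _.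
have e_split : expR 1 = expR (1 / 4) * expR (3 / 4) :> R by rewrite -expRD; congr expR; lra.
have e34 : 1 <= expR (- d) * expR (3 / 4).
  by rewrite -expRD -[leLHS]expR0 ler_expR; lra.
have ed_gt0 := expR_gt0 (- d); have ea_gt0 := expR_gt0 (1 / 4 : R).
have dq : d * expR (- d) <= 1 - expR (- d).
  by have := expR_ge1Dx d; have := expRxMexpNx_1 d; nra.
have : d <= expR (3 / 4) * (1 - expR (- d)) by nra.
rewrite e_split mulrA ler_pdivlMr // mulrAC mulrA ler_pdivrMr //.
nra.
Qed.

End exponential_bounds.

Lemma ler_term_sum {R : numDomainType} {I : eqType} {r : seq I} {F : I -> R} {i} :
  i \in r -> (forall j, 0 <= F j) -> F i <= \sum_(j <- r) F j.
Proof. by move=> ri F_ge0; rewrite (big_rem i) //= lerDl sumr_ge0. Qed.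

Lemma ler_term_sum2 {R : numDomainType} {I : eqType} {r : seq I} {F : I -> I -> R} {i j} :
  i \in r -> j \in r -> (forall i j, 0 <= F i j) ->
  F i j <= \sum_(i <- r) \sum_(j <- r) F i j.
Proof.
move=> ri rj F_ge0; apply: le_trans (ler_term_sum ri _) => [|i'].
  exact: ler_term_sum.
by apply: sumr_ge0.
Qed.

Section pair_weight.
Context {R : realType}.
Implicit Types B x y : R.

Definition pair_weight B x y : R :=
  (x - y) ^+ 2 * expR (- x ^+ 2 / (2 * B) - y ^+ 2 / (2 * B)).

Lemma pair_weight_ge0 B x y : 0 <= pair_weight B x y.
Proof. by rewrite mulr_ge0 ?sqr_ge0 ?expR_ge0. Qed.

Lemma pair_weight_ge B x y : 0 < B -> x ^+ 2 + y ^+ 2 <= 2 * B ->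
  (x - y) ^+ 2 / expR 1 <= pair_weight B x y.
Proof.
move=> B_gt0 xy_le; rewrite -expRN ler_wpM2l ?sqr_ge0 // ler_expR.
have : (x ^+ 2 + y ^+ 2) / (2 * B) <= 1 by rewrite ler_pdivrMr ?mul1r //; lra.
by rewrite mulrDl; lra.
Qed.

Lemma pair_weight_le B x y : 0 < B ->
  pair_weight B x y <=
  16 * B * (expR (- x ^+ 2 / (4 * B)) * expR (- y ^+ 2 / (4 * B))).
Proof.
move=> B_gt0; rewrite /pair_weight.
have -> : expR (- x ^+ 2 / (2 * B) - y ^+ 2 / (2 * B)) =
    expR (- x ^+ 2 / (4 * B)) ^+ 2 * expR (- y ^+ 2 / (4 * B)) ^+ 2.
  by rewrite -!expRM_natl -expRD; congr expR; field; lra.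
have B4_gt0 : 0 < 4 * B by lra.
have xa := sqr_mulr_expRN_le _ x B4_gt0; have yb := sqr_mulr_expRN_le _ y B4_gt0.
set a := expR (- x ^+ 2 / (4 * B)) in xa *; set b := expR (- y ^+ 2 / (4 * B)) in yb *.
have a_ge0 : 0 <= a by apply: expR_ge0.
have b_ge0 : 0 <= b by apply: expR_ge0.
have a_le1 : a <= 1 by rewrite expR_le1 mulNr oppr_le0 divr_ge0 ?sqr_ge0 //; lra.
have b_le1 : b <= 1 by rewrite expR_le1 mulNr oppr_le0 divr_ge0 ?sqr_ge0 //; lra.
have : (x - y) ^+ 2 <= 2 * x ^+ 2 + 2 * y ^+ 2 by have := sqr_ge0 (x + y); lra.
have ab2 : a * b ^+ 2 <= a * b by rewrite expr2 mulrA ler_piMr ?mulr_ge0.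
have ba2 : b * a ^+ 2 <= a * b by rewrite expr2 mulrA [b * a]mulrC ler_piMr ?mulr_ge0.
have : x ^+ 2 * a * (a * b ^+ 2) <= 4 * B * (a * b).
  by apply: ler_pM => //; apply: mulr_ge0; rewrite ?sqr_ge0.
have : y ^+ 2 * b * (b * a ^+ 2) <= 4 * B * (a * b).
  by apply: ler_pM => //; apply: mulr_ge0; rewrite ?sqr_ge0.
nra.
Qed.

End pair_weight.

Section window.
Context {R : realType} {p : nat} {A B s : R}.
Hypothesis p_gt0 : (0 < p)%N.

Local Notation N := (window_bound p A B s).
Local Notation w := (window p A B s).

Lemma mem_window k : `|k%:~R * p%:R - A| <= s * Num.sqrt B -> k \in w.
Proof.
move=> k_near; rewrite /window mem_filter k_near andTb.
set X := (`|A| + s * Num.sqrt B) / p%:R.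
have p_gt0R : (0 : R) < p%:R by rewrite ltr0n.
have k_le : `|k| <= Num.floor X.
  rewrite floor_ge_int intr_norm /X ler_pdivlMr // -[p%:R in leLHS]normr_nat -normrM.
  by have := ler_normD (k%:~R * p%:R - A) A; rewrite subrK; lra.
have N_eq : N%:Z = Num.floor X + 1.
  by rewrite /window_bound -/X PoszD gez0_abs // (le_trans _ k_le).
apply/mapP; exists (absz (k + N%:Z)); last by rewrite gez0_abs; lia.
by rewrite mem_iota /=; lia.
Qed.

Lemma sum_window_le (f : int -> R) : (forall k, 0 <= f k) ->
  \sum_(k <- w) f k <= \sum_(0 <= i < (N + N).+1) f (i%:Z - N%:Z).
Proof.
move=> f_ge0; rewrite big_filter big_mkcond big_map /index_iota subn0.
by apply: ler_sum => i _; case: ifP.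
Qed.

Hypotheses (B_gt0 : 0 < B) (p_le_sqrtB : p%:R <= Num.sqrt B).

Lemma sum_window_gauss_le :
  \sum_(k <- w) expR (- (k%:~R * p%:R - A) ^+ 2 / (4 * B))
    <= 4 * expR 1 * Num.sqrt B / p%:R.
Proof.
have p_gt0R : (0 : R) < p%:R by rewrite ltr0n.
have sqrtB_gt0 : 0 < Num.sqrt B by rewrite sqrtr_gt0.
have sqrtB2 : Num.sqrt B ^+ 2 = B := sqr_sqrtr (ltW B_gt0).
pose d := p%:R / (2 * Num.sqrt B).
pose c := (- (N%:R * p%:R) - A) / (2 * Num.sqrt B).
have d_gt0 : 0 < d by rewrite /d divr_gt0 //; lra.
have d_le : d <= 3 / 4.
  by rewrite /d ler_pdivrMr ?mulr_gt0 //; apply: le_trans p_le_sqrtB _; lra.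
apply: le_trans (sum_window_le _ _) _ => [k|]; first exact: expR_ge0.
have -> : 4 * expR 1 * Num.sqrt B / p%:R = 2 * expR 1 / d.
  by rewrite /d; field; rewrite ?pnatr_eq0 -?lt0n ?gt_eqF.
rewrite (eq_bigr (fun i => expR (- (c + i%:R * d) ^+ 2))) ?sum_gauss_le // => i _.
congr expR.
rewrite intrB /c /d -[in 4 * B]sqrtB2 /=.
by field; rewrite gt_eqF.
Qed.

Lemma claim_sumE : claim_sum p A B s =
  \sum_(k1 <- w) \sum_(k2 <- w) pair_weight B (k1%:~R * p%:R - A) (k2%:~R * p%:R - A).
Proof.
apply: eq_bigr => k1 _; apply: eq_bigr => k2 _.
by rewrite /pair_weight; congr (_ ^+ 2 * _); ring.
Qed.

Lemma claim_sum_ge : 1 <= s -> p%:R ^+ 2 / expR 1 <= claim_sum p A B s.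
Proof.
move=> s_ge1.
have p_gt0R : (0 : R) < p%:R by rewrite ltr0n.
have p_le_ssqrtB : p%:R <= s * Num.sqrt B.
  by rewrite -[leLHS]mul1r ler_pM // ?ler01 ?ler0n.
have p2_le : p%:R ^+ 2 <= B.
  by rewrite -[leRHS](sqr_sqrtr (ltW B_gt0)) ler_sqr ?nnegrE ?ler0n ?sqrtr_ge0.
pose k := Num.floor (A / p%:R); pose x := k%:~R * p%:R - A.
have x_le0 : x <= 0 by rewrite /x subr_le0 -ler_pdivlMr ?floor_le.
have x_gt : - p%:R < x.
  have := floorD1_gt (A / p%:R); rewrite -/k intrD ltr_pdivrMr // mulrDl mul1r.
  by rewrite /x; lra.
have k_in : k \in w.
  by apply: mem_window; apply: le_trans p_le_ssqrtB; rewrite -/x ler_norml; lra.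
have x1E : (k + 1)%:~R * p%:R - A = x + p%:R by rewrite intrD /x; ring.
have k1_in : k + 1 \in w.
  by apply: mem_window; apply: le_trans p_le_ssqrtB; rewrite x1E ler_norml; lra.
rewrite claim_sumE.
apply: le_trans _ (ler_term_sum2 k_in k1_in _) => [|? ?]; last exact: pair_weight_ge0.
rewrite x1E.
have -> : p%:R ^+ 2 = (x - (x + p%:R)) ^+ 2 by rewrite opprD addrA subrr sub0r sqrrN.
by apply: pair_weight_ge => //; nra.
Qed.

Lemma claim_sum_le : claim_sum p A B s <= 256 * expR 1 ^+ 2 * B ^+ 2 / p%:R ^+ 2.
Proof.
have p_gt0R : (0 : R) < p%:R by rewrite ltr0n.
pose g (k : int) := expR (- (k%:~R * p%:R - A) ^+ 2 / (4 * B)).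
pose S := \sum_(k <- w) g k.
have S_ge0 : 0 <= S by apply: sumr_ge0 => k _; apply: expR_ge0.
have S_le : S <= 4 * expR 1 * Num.sqrt B / p%:R := sum_window_gauss_le.
rewrite claim_sumE.
apply: (@le_trans _ _ (16 * B * (S * S))).
  rewrite mulr_suml mulr_sumr; apply: ler_sum => k1 _.
  rewrite !mulr_sumr; apply: ler_sum => k2 _.
  exact: pair_weight_le.
have -> : 256 * expR 1 ^+ 2 * B ^+ 2 / p%:R ^+ 2 = 16 * B *
    ((4 * expR 1 * Num.sqrt B / p%:R) * (4 * expR 1 * Num.sqrt B / p%:R)).
  rewrite -[B in 16 * B](sqr_sqrtr (ltW B_gt0)) -[B in LHS](sqr_sqrtr (ltW B_gt0)).
  by field; rewrite gt_eqF.
by rewrite ler_wpM2l ?ler_pM // mulr_ge0 // ltW.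
Qed.

End window.

Lemma expR1_sqr_pi_ge (R : realType) : 256 <= 24 * expR 1 ^+ 2 * pi :> R.
Proof.
have e_ge : (1 + 4%:R^-1) ^+ 4 <= expR 1 :> R := expR1_ge_pow 3.
have e2_ge : 16 / 3 <= expR 1 ^+ 2 :> R by rewrite expr2; nra.
have := ler_pM _ _ e2_ge (@pi_ge2 R); lra.
Qed.

Theorem claim6p2 (R : realType) (A B s : R) (p : nat)
  (hA : 0 < A) (hB : 0 < B) (hs0 : 0 < s) (hs : 1 <= s)
  (hp : (0 < p)%N) (hpB : (p%:R : R) <= Num.sqrt B) :
  (p%:R ^+ 2 / expR 1 <= claim_sum p A B s) /\
  (claim_sum p A B s <= 24 * expR 1 ^+ 4 * pi * B ^+ 2 / p%:R ^+ 2).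
Proof.
split; first exact: claim_sum_ge.
apply: le_trans (claim_sum_le hp hB hpB) _.
set C := expR 1 ^+ 2 * B ^+ 2 / p%:R ^+ 2.
have C_ge0 : 0 <= C by apply: divr_ge0; [apply: mulr_ge0|]; apply: sqr_ge0.
rewrite [leLHS](_ : _ = 256 * C) ?[leRHS](_ : _ = 24 * expR 1 ^+ 2 * pi * C); try by rewrite /C; ring.
by apply: ler_wpM2r => //; apply: expR1_sqr_pi_ge.
Qed.
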